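(* Let $\mathscr{H}$ be a complex Hilbert space and let $N(\cdot)$ be a norm on $\mathbb{B}(\mathscr{H})$ which is an algebra norm ($N(XY)\leq N(X)N(Y)$ for all $X,Y$) and self-adjoint ($N(X^* )=N(X)$ for all $X$). Then for all self-adjoint $B,C\in\mathbb{B}(\mathscr{H})$, $$\frac18N(C^2+B^2)+\frac12\max\{N(B),N(C)\}\,|N(B+C)-N(B-C)|\leq w_{(N,e)}^2(B,C).$$
   Context: For $T\in\mathbb{B}(\mathscr{H})$, $\Re(T)=\frac12(T+T^* )$. For $B,C\in\mathbb{B}(\mathscr{H})$, $w_{(N,e)}(B,C)=\sup_{\lambda_1,\lambda_2\in\mathbb{C},\ |\lambda_1|^2+|\lambda_2|^2\leq 1}\sup_{\theta\in\mathbb{R}} N(\Re(e^{i\theta}(\lambda_1B+\lambda_2C)))$. *)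

From HB Require Import structures.
From mathcomp Require Import all_boot all_order all_algebra.
From mathcomp Require Import all_classical all_reals.
From mathcomp Require Import trigo.
From mathcomp Require Import complex.
From Stdlib Require Import ClassicalEpsilon.
Set Implicit Arguments. Unset Strict Implicit. Unset Printing Implicit Defensive.
Import Order.TTheory GRing.Theory Num.Theory.
Local Open Scope ring_scope.

Section Hilbert.
Variable R : realType.
Local Notation C := (complex R).
Variable H : lmodType C.
(* inner product: linear in the first argument, conjugate-linear in the second *)
Variable ip : H -> H -> C.

Definition cabs (z : C) : R := Num.sqrt (complex.Re z ^+ 2 + complex.Im z ^+ 2).
Definition cconj (z : C) : C := Complex (complex.Re z) (- complex.Im z).

Definition hnorm (x : H) : R := Num.sqrt (complex.Re (ip x x)).

Definition is_hilbert : Prop :=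
  [/\ (forall (a : C) (x y z : H), ip (a *: x + y) z = a * ip x z + ip y z),
      (forall x y : H, ip y x = cconj (ip x y)),
      (forall x : H, 0 <= ip x x),
      (forall x : H, ip x x = 0 -> x = 0) &
      (forall u : nat -> H,
         (forall e : R, 0 < e -> exists M : nat, forall m n : nat,
            (M <= m)%N -> (M <= n)%N -> hnorm (u m - u n) < e) ->
         exists l : H, forall e : R, 0 < e -> exists M : nat, forall n : nat,
            (M <= n)%N -> hnorm (u n - l) < e)].

(* operators on H are modelled as functions H -> H; B(H) = bounded linear ones *)
Definition is_bounded_op (T : H -> H) : Prop :=
  (forall (a : C) (x y : H), T (a *: x + y) = a *: T x + T y) /\
  exists M : R, forall x : H, hnorm (T x) <= M * hnorm x.

Definition opadd (T S : H -> H) : H -> H := fun x => T x + S x.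
Definition opopp (T : H -> H) : H -> H := fun x => - T x.
Definition opscale (a : C) (T : H -> H) : H -> H := fun x => a *: T x.
Definition opmul (T S : H -> H) : H -> H := fun x => T (S x).

Definition is_adjoint_of (T S : H -> H) : Prop :=
  forall x y : H, ip (T x) y = ip x (S y).

(* the adjoint T^* (exists and is unique for bounded T on a Hilbert space) *)
Definition adjoint (T : H -> H) : H -> H :=
  epsilon (inhabits T) (fun S => is_adjoint_of T S).

Definition is_selfadjoint (T : H -> H) : Prop := is_adjoint_of T T.

Definition opRe (T : H -> H) : H -> H :=
  opscale (2%:R^-1) (opadd T (adjoint T)).

Definition is_selfadj_algebra_norm (N : (H -> H) -> R) : Prop :=
  [/\ (forall X, is_bounded_op X -> 0 <= N X),
      (forall X, is_bounded_op X -> N X = 0 -> X = (fun _ => 0)),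
      (forall a X, is_bounded_op X -> N (opscale a X) = cabs a * N X),
      (forall X Y, is_bounded_op X -> is_bounded_op Y ->
                   N (opadd X Y) <= N X + N Y) &
      ((forall X Y, is_bounded_op X -> is_bounded_op Y ->
                   N (opmul X Y) <= N X * N Y) /\
      (forall X, is_bounded_op X -> N (adjoint X) = N X))].

Definition expi (t : R) : C := Complex (cos t) (sin t).

Definition wNe (N : (H -> H) -> R) (B C0 : H -> H) : R :=
  sup [set r : R | exists (l1 l2 : C) (t : R),
         cabs l1 ^+ 2 + cabs l2 ^+ 2 <= 1 /\
         r = N (opRe (opscale (expi t) (opadd (opscale l1 B) (opscale l2 C0))))].

End Hilbert.

From HB Require Import structures.
From mathcomp Require Import all_boot all_order all_algebra.
From mathcomp Require Import all_classical all_reals.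
From mathcomp Require Import trigo.
From mathcomp Require Import complex.
From mathcomp Require Import ring lra.
From Stdlib Require Import ClassicalEpsilon.
Set Implicit Arguments. Unset Strict Implicit. Unset Printing Implicit Defensive.
Import Order.TTheory GRing.Theory Num.Theory.
Local Open Scope ring_scope.

(* Crude bounds suffice.  Taking phase 0 and the admissible pairs (1,0), (0,1),
   (k,k), (k,-k) with k = 7/10 (so that 2k^2 <= 1), and using that Re fixes
   self-adjoint operators, gives N(B), N(C), k N(B+C), k N(B-C) <= w.  Hence
   N(C^2+B^2)/8 <= (N(C)^2 + N(B)^2)/8 <= w^2/4 and
   max(N B, N C) |N(B+C) - N(B-C)| / 2 <= w (w/k) / 2 = 5w^2/7, and
   1/4 + 5/7 < 1.  The supremum defining w is finite since
   N(Re X) <= (N X + N X^* )/2 = N X <= N(B) + N(C) for every X = e(l1 B + l2 C). *)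

Section ComplexModulus.
Variable R : realType.

Lemma cabs_ge0 (z : complex R) : 0 <= cabs z.
Proof. exact: sqrtr_ge0. Qed.

Lemma cabs_real (a : R) : cabs (a%:C)%C = `|a|.
Proof. by rewrite /cabs /= expr0n /= addr0 sqrtr_sqr. Qed.

Lemma cabs_expi (t : R) : cabs (expi t) = 1.
Proof. by rewrite /cabs /expi /= cos2Dsin2 sqrtr1. Qed.

Lemma expi0 : expi (0 : R) = 1.
Proof. by rewrite /expi cos0 sin0. Qed.

Lemma cabs_half : cabs (2%:R^-1 : complex R) = 2^-1.
Proof.
have -> : (2%:R^-1 : complex R) = ((2^-1 : R)%:C)%C by rewrite fmorphV /= rmorph_nat.
by rewrite cabs_real ger0_norm // invr_ge0 ler0n.
Qed.

End ComplexModulus.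

Section InnerProductSpace.
Variable R : realType.
Variable H : lmodType (complex R).
Variable ip : H -> H -> complex R.
Hypothesis hH : is_hilbert ip.

Lemma ipDZl a x y z : ip (a *: x + y) z = a * ip x z + ip y z.
Proof. by case: hH. Qed.

Lemma ip_conj x y : ip y x = conjc (ip x y).
Proof. by case: hH => _ -> _ _ _; case: (ip x y) => ? ?. Qed.

Lemma ipDl x y z : ip (x + y) z = ip x z + ip y z.
Proof. by rewrite -{1}[x]scale1r ipDZl mul1r. Qed.

Lemma ipZl a x z : ip (a *: x) z = a * ip x z.
Proof.
have ip0l : ip 0 z = 0 by apply/(addrI (ip 0 z)); rewrite -ipDl !addr0.
by rewrite -[a *: x]addr0 ipDZl ip0l addr0.
Qed.

Lemma ipNl x z : ip (- x) z = - ip x z.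
Proof. by rewrite -scaleN1r ipZl mulN1r. Qed.

Lemma ipDr x y z : ip z (x + y) = ip z x + ip z y.
Proof. by rewrite ip_conj ipDl rmorphD /= -!ip_conj. Qed.

Lemma ipZr a x z : ip z (a *: x) = conjc a * ip z x.
Proof. by rewrite ip_conj ipZl rmorphM /= -ip_conj. Qed.

Lemma ipNr x z : ip z (- x) = - ip z x.
Proof. by rewrite ip_conj ipNl rmorphN /= -ip_conj. Qed.

Local Notation sqnorm x := (complex.Re (ip x x)).

Lemma ip_selfE x : ip x x = ((sqnorm x)%:C)%C.
Proof.
case: hH => _ _ /(_ x) ipxx_ge0 _ _; move: ipxx_ge0.
by case: (ip x x) => a b; rewrite lecE /= => /andP[/eqP -> _].
Qed.

Lemma sqnorm_ge0 x : 0 <= sqnorm x.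
Proof.
case: hH => _ _ /(_ x) ipxx_ge0 _ _; move: ipxx_ge0.
by case: (ip x x) => a b; rewrite lecE /= => /andP[].
Qed.

Lemma sqnormZ a x :
  sqnorm (a *: x) = (complex.Re a ^+ 2 + complex.Im a ^+ 2) * sqnorm x.
Proof. by rewrite ipZl ipZr ip_selfE; case: a => r s /=; ring. Qed.

(* Via the parallelogram law, so no Cauchy-Schwarz inequality is needed. *)
Lemma sqnormD_le x y : sqnorm (x + y) <= 2 * sqnorm x + 2 * sqnorm y.
Proof.
have parallelogram : ip (x + y) (x + y) + ip (x - y) (x - y) = 2 * ip x x + 2 * ip y y.
  by rewrite !ipDl !ipDr !ipNl !ipNr; ring.
move/(congr1 (@complex.Re R)): parallelogram; move: (sqnorm_ge0 (x - y)).
by case: (ip (x + y) _) (ip (x - y) _) (ip x x) (ip y y) => [? ?] [? ?] [? ?] [? ?] /=; lra.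
Qed.

Lemma op_boundP (T : H -> H) :
  (exists M, forall x, hnorm ip (T x) <= M * hnorm ip x) <->
  exists2 K, 0 <= K & forall x, sqnorm (T x) <= K * sqnorm x.
Proof.
split=> [[M hM] | [K K0 hK]].
  exists (M ^+ 2) => [|x]; first exact: sqr_ge0.
  have hTx : 0 <= hnorm ip (T x) by exact: sqrtr_ge0.
  have : hnorm ip (T x) ^+ 2 <= (M * hnorm ip x) ^+ 2.
    by rewrite ler_sqr ?nnegrE //; apply: le_trans (hM x).
  by rewrite exprMn /hnorm !sqr_sqrtr ?sqnorm_ge0.
exists (Num.sqrt K) => x; rewrite /hnorm -sqrtrM // ler_sqrt ?hK //.
exact/mulr_ge0/sqnorm_ge0.
Qed.

Local Notation bounded := (is_bounded_op ip).

Lemma bounded_opD T S : bounded T -> bounded S -> bounded (opadd T S).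
Proof.
move=> [lT /op_boundP [K1 K10 h1]] [lS /op_boundP [K2 K20 h2]]; split.
  by move=> a x y; rewrite /opadd lT lS scalerDr addrACA.
apply/op_boundP; exists (2 * K1 + 2 * K2) => [|x]; first lra.
apply: le_trans (sqnormD_le _ _) _.
by have := h1 x; have := h2 x; have := sqnorm_ge0 x; nra.
Qed.

Lemma bounded_opZ a T : bounded T -> bounded (opscale a T).
Proof.
have a2_ge0 : 0 <= complex.Re a ^+ 2 + complex.Im a ^+ 2 by rewrite addr_ge0 ?sqr_ge0.
move=> [lT /op_boundP [K K0 hK]]; split.
  by move=> b x y; rewrite /opscale lT scalerDr !scalerA mulrC.
apply/op_boundP; exists ((complex.Re a ^+ 2 + complex.Im a ^+ 2) * K) => [|x].
  exact: mulr_ge0.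
by rewrite /opscale sqnormZ -mulrA ler_wpM2l.
Qed.

Lemma bounded_opN T : bounded T -> bounded (opopp T).
Proof.
have -> : opopp T = opscale (-1) T by apply: boolp.funext => x; rewrite /opscale scaleN1r.
exact: bounded_opZ.
Qed.

Lemma bounded_opM T S : bounded T -> bounded S -> bounded (opmul T S).
Proof.
move=> [lT /op_boundP [K1 K10 h1]] [lS /op_boundP [K2 K20 h2]]; split.
  by move=> a x y; rewrite /opmul lS lT.
apply/op_boundP; exists (K1 * K2) => [|x]; first exact: mulr_ge0.
by apply: le_trans (h1 _) _; rewrite -mulrA ler_wpM2l.
Qed.

Lemma adjointE T S : is_adjoint_of ip T S -> adjoint ip T = S.
Proof.
move=> hS; have := epsilon_spec (inhabits T) (is_adjoint_of ip T) (ex_intro _ S hS).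
rewrite -/(adjoint ip T); move: (adjoint ip T) => S' hS'.
apply: boolp.funext => y; apply/eqP; rewrite -subr_eq0; apply/eqP.
have orth x : ip (S' y - S y) x = 0.
  by rewrite ipDl ipNl (ip_conj x (S' y)) (ip_conj x (S y)) -hS -hS' subrr.
by case: hH => _ _ _ definite _; apply/definite/orth.
Qed.

Local Notation selfadjoint := (is_selfadjoint ip).

Lemma selfadjointD T S : selfadjoint T -> selfadjoint S -> selfadjoint (opadd T S).
Proof. by move=> hT hS x y; rewrite /opadd ipDl ipDr hT hS. Qed.

Lemma selfadjointZ_real (a : R) T : selfadjoint T -> selfadjoint (opscale (a%:C)%C T).
Proof. by move=> hT x y; rewrite /opscale ipZl ipZr conjc_real hT. Qed.

Lemma opRe_selfadjoint T : selfadjoint T -> opRe ip T = T.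
Proof.
move=> /adjointE adjT; rewrite /opRe adjT; apply: boolp.funext => x.
rewrite /opscale /opadd -mulr2n -scalerMnr scalerMnl -mulr_natr mulVf ?scale1r //.
by rewrite pnatr_eq0.
Qed.

Lemma adjoint_combination e l1 l2 T S : selfadjoint T -> selfadjoint S ->
  is_adjoint_of ip (opscale e (opadd (opscale l1 T) (opscale l2 S)))
    (opscale (conjc e) (opadd (opscale (conjc l1) T) (opscale (conjc l2) S))).
Proof.
move=> hT hS x y; rewrite /opscale /opadd ipZl ipZr ipDl ipDr !ipZl !ipZr !conjcK.
by rewrite hT hS.
Qed.

End InnerProductSpace.

Section SelfAdjointAlgebraNorm.
Variable R : realType.
Variable H : lmodType (complex R).
Variable ip : H -> H -> complex R.
Hypothesis hH : is_hilbert ip.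
Variable N : (H -> H) -> R.
Hypothesis hN : is_selfadj_algebra_norm ip N.
Local Notation bounded := (is_bounded_op ip).
Local Notation selfadjoint := (is_selfadjoint ip).

Lemma N_ge0 X : bounded X -> 0 <= N X.
Proof. by case: hN => + _ _ _ _; apply. Qed.

Lemma NZ a X : bounded X -> N (opscale a X) = cabs a * N X.
Proof. by case: hN => _ _ + _ _; apply. Qed.

Lemma N_add_le X Y : bounded X -> bounded Y -> N (opadd X Y) <= N X + N Y.
Proof. by case: hN => _ _ _ + _; apply. Qed.

Lemma N_mul_le X Y : bounded X -> bounded Y -> N (opmul X Y) <= N X * N Y.
Proof. by case: hN => _ _ _ _ [+ _]; apply. Qed.

Lemma N_adjoint X : bounded X -> N (adjoint ip X) = N X.
Proof. by case: hN => _ _ _ _ [_ +]; apply. Qed.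

Lemma N_opRe_le X S : bounded X -> bounded S -> is_adjoint_of ip X S ->
  N (opRe ip X) <= N X.
Proof.
move=> bX bS /(adjointE hH) adjX.
have NS : N S = N X by rewrite -adjX N_adjoint.
rewrite /opRe adjX NZ ?cabs_half; last exact: bounded_opD.
by have := N_add_le bX bS; have := N_ge0 bX; lra.
Qed.

Lemma N_combination_le e l1 l2 T S : bounded T -> bounded S ->
  cabs e <= 1 -> cabs l1 <= 1 -> cabs l2 <= 1 ->
  N (opscale e (opadd (opscale l1 T) (opscale l2 S))) <= N T + N S.
Proof.
move=> bT bS he hl1 hl2.
have [bl1 bl2] := (bounded_opZ hH l1 bT, bounded_opZ hH l2 bS).
rewrite NZ; last exact: bounded_opD.
have := N_add_le bl1 bl2; rewrite !NZ //.
have := N_ge0 bT; have := N_ge0 bS; have := N_ge0 (bounded_opD hH bl1 bl2).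
by have := cabs_ge0 e; have := cabs_ge0 l1; have := cabs_ge0 l2; nra.
Qed.

Section Pair.
Variables B C : H -> H.
Hypotheses (hB : bounded B) (hC : bounded C).
Hypotheses (sB : selfadjoint B) (sC : selfadjoint C).

Lemma le_wNe l1 l2 t : cabs l1 ^+ 2 + cabs l2 ^+ 2 <= 1 ->
  N (opRe ip (opscale (expi t) (opadd (opscale l1 B) (opscale l2 C)))) <= wNe ip N B C.
Proof.
move=> hl; apply: sup_upper_bound; last by exists l1, l2, t.
split; first by eexists; exists l1, l2, t.
exists (N B + N C) => _ [m1 [m2 [s [hm ->]]]].
have bX e k1 k2 : bounded (opscale e (opadd (opscale k1 B) (opscale k2 C))).
  by apply/bounded_opZ/bounded_opD => //; apply: bounded_opZ.
apply: le_trans (N_opRe_le (bX _ _ _) (bX _ _ _) (adjoint_combination hH _ _ _ sB sC)) _.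
have := cabs_ge0 m1; have := cabs_ge0 m2 => hm2 hm1.
by apply: N_combination_le; rewrite ?cabs_expi //; nra.
Qed.

Lemma le_wNe_real (a b : R) : a ^+ 2 + b ^+ 2 <= 1 ->
  N (opadd (opscale (a%:C)%C B) (opscale (b%:C)%C C)) <= wNe ip N B C.
Proof.
move=> hab; have := @le_wNe (a%:C)%C (b%:C)%C 0.
rewrite !cabs_real !real_normK ?num_real // => /(_ hab).
have -> : opscale (expi 0) (opadd (opscale (a%:C)%C B) (opscale (b%:C)%C C)) =
          opadd (opscale (a%:C)%C B) (opscale (b%:C)%C C).
  by apply: boolp.funext => x; rewrite /opscale expi0 scale1r.
by rewrite opRe_selfadjoint //; apply: selfadjointD => //; exact: selfadjointZ_real.
Qed.

Lemma N_le_wNe_l : N B <= wNe ip N B C.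
Proof.
have := @le_wNe_real 1 0; rewrite expr1n expr0n addr0 => /(_ (lexx _)).
suff -> : opadd (opscale (1%:C)%C B) (opscale (0%:C)%C C) = B by [].
by apply: boolp.funext => x; rewrite /opadd /opscale scale1r scale0r addr0.
Qed.

Lemma N_le_wNe_r : N C <= wNe ip N B C.
Proof.
have := @le_wNe_real 0 1; rewrite expr1n expr0n add0r => /(_ (lexx _)).
suff -> : opadd (opscale (0%:C)%C B) (opscale (1%:C)%C C) = C by [].
by apply: boolp.funext => x; rewrite /opadd /opscale scale1r scale0r add0r.
Qed.

Lemma N_add_le_wNe (k : R) : 0 <= k -> 2 * k ^+ 2 <= 1 ->
  k * N (opadd B C) <= wNe ip N B C.
Proof.
move=> k0 hk; have := @le_wNe_real k k; rewrite -mulr2n -mulr_natl => /(_ hk).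
suff -> : opadd (opscale (k%:C)%C B) (opscale (k%:C)%C C) = opscale (k%:C)%C (opadd B C).
  by rewrite NZ ?cabs_real ?ger0_norm //; exact: bounded_opD.
by apply: boolp.funext => x; rewrite /opadd /opscale scalerDr.
Qed.

Lemma N_sub_le_wNe (k : R) : 0 <= k -> 2 * k ^+ 2 <= 1 ->
  k * N (opadd B (opopp C)) <= wNe ip N B C.
Proof.
move=> k0 hk; have := @le_wNe_real k (- k); rewrite sqrrN -mulr2n -mulr_natl => /(_ hk).
suff -> : opadd (opscale (k%:C)%C B) (opscale ((- k)%:C)%C C) =
          opscale (k%:C)%C (opadd B (opopp C)).
  by rewrite NZ ?cabs_real ?ger0_norm //; apply/bounded_opD/bounded_opN.
apply: boolp.funext => x; rewrite /opadd /opscale /opopp scalerDr scalerN.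
by rewrite -scaleNr raddfN.
Qed.

End Pair.
End SelfAdjointAlgebraNorm.

Lemma le_sqr_from_bounds (F : realFieldType) (s b c a d w : F) :
  0 <= b -> 0 <= c -> 0 <= a -> 0 <= d ->
  s <= c ^+ 2 + b ^+ 2 -> b <= w -> c <= w ->
  7%:R / 10%:R * a <= w -> 7%:R / 10%:R * d <= w ->
  8%:R^-1 * s + 2%:R^-1 * Num.max b c * `|a - d| <= w ^+ 2.
Proof.
move=> b0 c0 a0 d0 hs hb hc ha hd.
have max_le : Num.max b c <= w by rewrite ge_max hb hc.
have max_ge0 : 0 <= Num.max b c by rewrite le_max b0.
have dist_le : `|a - d| <= 10%:R / 7%:R * w by rewrite ler_norml; apply/andP; split; lra.
have := ler_pM max_ge0 (normr_ge0 (a - d)) max_le dist_le.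
by nra.
Qed.

Theorem corollary2p15 (R : realType) (H : lmodType (complex R))
  (ip : H -> H -> complex R) (hH : is_hilbert ip)
  (N : (H -> H) -> R) (hN : is_selfadj_algebra_norm ip N)
  (B C : H -> H)
  (hB : is_bounded_op ip B) (hC : is_bounded_op ip C)
  (sB : is_selfadjoint ip B) (sC : is_selfadjoint ip C) :
  8%:R^-1 * N (opadd (opmul C C) (opmul B B))
  + 2%:R^-1 * Num.max (N B) (N C)
      * `| N (opadd B C) - N (opadd B (opopp C)) |
  <= wNe ip N B C ^+ 2.
Proof.
have k0 : 0 <= 7%:R / 10%:R :> R by rewrite divr_ge0 ?ler0n.
have hk : 2 * (7%:R / 10%:R) ^+ 2 <= 1 :> R by lra.
have bBpC := bounded_opD hH hB hC.
have bBmC := bounded_opD hH hB (bounded_opN hH hC).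
have NsqBC : N (opadd (opmul C C) (opmul B B)) <= N C ^+ 2 + N B ^+ 2.
  have [bCC bBB] := (bounded_opM hH hC hC, bounded_opM hH hB hB).
  apply: le_trans (N_add_le hN bCC bBB) _.
  by rewrite !expr2 lerD ?(N_mul_le hN).
exact: (le_sqr_from_bounds (N_ge0 hN hB) (N_ge0 hN hC) (N_ge0 hN bBpC)
  (N_ge0 hN bBmC) NsqBC (N_le_wNe_l hH hN hB hC sB sC) (N_le_wNe_r hH hN hB hC sB sC)
  (N_add_le_wNe hH hN hB hC sB sC k0 hk) (N_sub_le_wNe hH hN hB hC sB sC k0 hk)).
Qed.
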